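(* Let $R$ be a ring, $S$ an almost left Ore set of $R$, $\mathfrak{a}=\mathrm{ass}_R(S)$, and $\mathfrak{a}_r$ the ideal of $R$ generated by $\mathrm{ass}_r(S)=\{r\in R:rs=0\text{ for some }s\in S\}$. Then \begin{enumerate} \item $S_r:=(S+\mathfrak{a}_r)/\mathfrak{a}_r$ is a left Ore set of $R/\mathfrak{a}_r$. \item The following are equivalent: $S$ is left localizable in $R$; $S_r$ is left localizable in $R/\mathfrak{a}_r$; ${}'\mathfrak{a}(S_r)\neq R/\mathfrak{a}_r$; ${}'\mathfrak{a}(S)\ne R$. \item Suppose ${}'\mathfrak{a}:={}'\mathfrak{a}(S)\neq R$. Let ${}'\pi:R\to{}'R=R/{}'\mathfrak{a}$, $r\mapsto{}'r=r+{}'\mathfrak{a}$, and ${}'S={}'\pi(S)$. Then \begin{enumerate} \item ${}'S$ is a left denominator set of ${}'R$ contained in ${}'\mathcal{C}_{{}'R}$; \item $\mathfrak{a}={}'\pi^{-1}(\mathrm{ass}_l({}'S))$; \item $R\langle S^{-1}\rangle\simeq{}'S^{-1}\,{}'R$, an $R$-isomorphism. \end{enumerate} \end{enumerate}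
   Context: Rings are associative with $1$. Multiplicative set: $SS\subseteq S$, $1\in S$, $0\notin S$. Almost left Ore set: for all $s\in S,r\in R$ there are $s_1,s_2\in S$, $r_1\in R$ with $(s_1r-r_1s)s_2=0$. Left Ore set: $Sr\cap Rs\ne\emptyset$ for all $r\in R,s\in S$; left denominator set: left Ore and $rs=0$ ($s\in S$) implies $tr=0$ for some $t\in S$; $T^{-1}A$ is the left Ore localization; $\mathrm{ass}_l(T)=\{a:ta=0\text{ for some }t\in T\}$. For a multiplicative set $T$ of a ring $A$: $A\langle T^{-1}\rangle=A\langle X_T\rangle/I_T$ ($A\langle X_T\rangle$ freely generated by $A$ and noncommuting $x_t$, $I_T$ generated by $tx_t-1,x_tt-1$); $\mathrm{ass}_A(T)=\ker(A\to A\langle T^{-1}\rangle)$; $T$ is left localizable if $A\langle T^{-1}\rangle\neq0$ and every element has the form $(x_t+I_T)(a+I_T)$. ${}'\mathcal{C}_A=\{a\in A: xa=0\Rightarrow x=0\}$, and ${}'\mathfrak{a}(T)$ is the least ideal $\mathfrak{b}$ of $A$ such that the image of $T$ in $A/\mathfrak{b}$ lies in ${}'\mathcal{C}_{A/\mathfrak{b}}$ (it exists). *)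

From HB Require Import structures.
From mathcomp Require Import all_boot all_algebra.
From mathcomp Require Import generic_quotient.
From mathcomp Require Import boolp.

Set Implicit Arguments.
Unset Strict Implicit.
Unset Printing Implicit Defensive.

Import GRing.Theory.
Local Open Scope ring_scope.
Local Open Scope quotient_scope.

(* Rings are associative with 1; we use pzRingType so that the zero ring
   (e.g. a quotient R/R, or a universal localization equal to 0) is allowed. *)

Definition is_ideal (A : pzRingType) (I : A -> Prop) : Prop :=
  [/\ I 0, (forall x y, I x -> I y -> I (x - y)),
      (forall r x, I x -> I (r * x)) & (forall r x, I x -> I (x * r))].

Record ideal (A : pzRingType) := Ideal {
  ideal_mem :> A -> Prop;
  idealP : is_ideal ideal_mem }.

Definition gen_ideal (A : pzRingType) (X : A -> Prop) : A -> Prop :=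
  fun a => forall J : A -> Prop, is_ideal J -> (forall x, X x -> J x) -> J a.

Lemma gen_ideal_is_ideal (A : pzRingType) (X : A -> Prop) :
  is_ideal (gen_ideal X).
Proof.
split.
- by move=> J [] *.
- by move=> x y Hx Hy J HJ HX; case: (HJ) => _ HSub _ _; apply: (HSub); [apply: Hx|apply: Hy].
- by move=> r x Hx J HJ HX; case: (HJ) => _ _ HL _; apply: (HL); apply: Hx.
- by move=> r x Hx J HJ HX; case: (HJ) => _ _ _ HR; apply: (HR); apply: Hx.
Qed.

Definition gen_ideal_ideal (A : pzRingType) (X : A -> Prop) : ideal A :=
  Ideal (gen_ideal_is_ideal X).

Section Quotient.
Variables (A : pzRingType) (I : ideal A).

Definition qrel (x y : A) : bool := `[< I (x - y) >].

Lemma qrel_refl : reflexive qrel.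
Proof. by move=> x; apply/asboolP; rewrite subrr; case: (idealP I). Qed.

Lemma qrel_sym : symmetric qrel.
Proof.
move=> x y; apply/asboolP/asboolP => H; case: (idealP I) => H0 HSub _ _;
  by have := HSub _ _ H0 H; rewrite sub0r opprB.
Qed.

Lemma qrel_trans : transitive qrel.
Proof.
move=> y x z /asboolP Hxy /asboolP Hyz; apply/asboolP.
case: (idealP I) => H0 HSub _ _.
have := HSub _ _ Hxy (HSub _ _ H0 Hyz).
by rewrite sub0r opprB opprB addrA subrK.
Qed.

Canonical qrel_equiv := EquivRel qrel qrel_refl qrel_sym qrel_trans.

Definition quot := {eq_quot qrel_equiv}.
HB.instance Definition _ := Choice.on quot.

Definition qpi (a : A) : quot := \pi_quot a.

Lemma qpiP (x y : A) : qpi x = qpi y <-> I (x - y).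
Proof.
split=> [/eqquotP/asboolP //|H]; apply/eqquotP; exact/asboolP.
Qed.

Lemma qpi_repr (q : quot) : qpi (repr q) = q.
Proof. exact: reprK. Qed.

Lemma qpi_ind (P : quot -> Prop) : (forall a, P (qpi a)) -> forall q, P q.
Proof. by move=> H q; rewrite -(qpi_repr q); apply: H. Qed.

Definition qzero : quot := qpi 0.
Definition qopp (q : quot) : quot := qpi (- repr q).
Definition qadd (p q : quot) : quot := qpi (repr p + repr q).
Definition qone : quot := qpi 1.
Definition qmul (p q : quot) : quot := qpi (repr p * repr q).

Lemma reprP (a : A) : I (repr (qpi a) - a).
Proof. by apply/qpiP; rewrite qpi_repr. Qed.

Lemma qoppE a : qopp (qpi a) = qpi (- a).
Proof.
apply/qpiP; have := reprP a; case: (idealP I) => H0 HSub _ _ H.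
by rewrite opprK addrC; have := HSub _ _ H0 H; rewrite sub0r opprB.
Qed.

Lemma qaddE a b : qadd (qpi a) (qpi b) = qpi (a + b).
Proof.
apply/qpiP; have Ha := reprP a; have Hb := reprP b.
case: (idealP I) => H0 HSub _ _.
have E : repr (qpi a) + repr (qpi b) - (a + b) =
  (repr (qpi a) - a) - (0 - (repr (qpi b) - b)).
  by rewrite sub0r opprK opprD addrACA.
by rewrite E; apply: (HSub) => //; apply: (HSub).
Qed.

Lemma qmulE a b : qmul (qpi a) (qpi b) = qpi (a * b).
Proof.
apply/qpiP; have Ha := reprP a; have Hb := reprP b.
case: (idealP I) => H0 HSub HL HR.
have E : repr (qpi a) * repr (qpi b) - a * b =
  (repr (qpi a) - a) * repr (qpi b) - (- (a * (repr (qpi b) - b))).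
  by rewrite mulrBl mulrBr opprK addrA subrK.
by rewrite E; apply: (HSub); [apply: (HR)|rewrite -sub0r; apply: (HSub) => //; apply: (HL)].
Qed.

Lemma q_addrA : associative qadd.
Proof.
by elim/qpi_ind=> x; elim/qpi_ind=> y; elim/qpi_ind=> z; rewrite !qaddE addrA.
Qed.
Lemma q_addrC : commutative qadd.
Proof. by elim/qpi_ind=> x; elim/qpi_ind=> y; rewrite !qaddE addrC. Qed.
Lemma q_add0r : left_id qzero qadd.
Proof. by elim/qpi_ind=> x; rewrite /qzero qaddE add0r. Qed.
Lemma q_addNr : left_inverse qzero qopp qadd.
Proof. by elim/qpi_ind=> x; rewrite qoppE qaddE addNr. Qed.
Lemma q_mulrA : associative qmul.
Proof.
by elim/qpi_ind=> x; elim/qpi_ind=> y; elim/qpi_ind=> z; rewrite !qmulE mulrA.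
Qed.
Lemma q_mul1r : left_id qone qmul.
Proof. by elim/qpi_ind=> x; rewrite /qone qmulE mul1r. Qed.
Lemma q_mulr1 : right_id qone qmul.
Proof. by elim/qpi_ind=> x; rewrite /qone qmulE mulr1. Qed.
Lemma q_mulrDl : left_distributive qmul qadd.
Proof.
by elim/qpi_ind=> x; elim/qpi_ind=> y; elim/qpi_ind=> z;
  rewrite !(qaddE, qmulE) mulrDl.
Qed.
Lemma q_mulrDr : right_distributive qmul qadd.
Proof.
by elim/qpi_ind=> x; elim/qpi_ind=> y; elim/qpi_ind=> z;
  rewrite !(qaddE, qmulE) mulrDr.
Qed.

HB.instance Definition _ := GRing.isPzRing.Build quot
  q_addrA q_addrC q_add0r q_addNr q_mulrA q_mul1r q_mulr1 q_mulrDl q_mulrDr.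

Lemma qpi_is_nmod_morphism : nmod_morphism qpi.
Proof. by rewrite /nmod_morphism; split=> // x y; exact: (esym (qaddE x y)). Qed.

Lemma qpi_is_monoid_morphism : monoid_morphism qpi.
Proof. by rewrite /monoid_morphism; split=> // x y; exact: (esym (qmulE x y)). Qed.

HB.instance Definition _ := GRing.isNmodMorphism.Build A quot qpi
  qpi_is_nmod_morphism.
HB.instance Definition _ := GRing.isMonoidMorphism.Build A quot qpi
  qpi_is_monoid_morphism.

End Quotient.

Section Sets.
Variable A : pzRingType.
Implicit Types (S T : A -> Prop).

Definition mult_set S : Prop :=
  [/\ (forall s t, S s -> S t -> S (s * t)), S 1 & ~ S 0].

Definition almost_left_ore S : Prop :=
  forall s r, S s -> exists s1 s2 r1,
    [/\ S s1, S s2 & (s1 * r - r1 * s) * s2 = 0].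

Definition left_ore S : Prop :=
  forall r s, S s -> exists s' r', S s' /\ s' * r = r' * s.

Definition left_denominator S : Prop :=
  left_ore S /\ (forall r s, S s -> r * s = 0 -> exists t, S t /\ t * r = 0).

Definition ass_l T : A -> Prop := fun a => exists t, T t /\ t * a = 0.
Definition ass_r T : A -> Prop := fun r => exists t, T t /\ r * t = 0.

Definition lC : A -> Prop := fun a => forall x, x * a = 0 -> x = 0.

End Sets.

Definition image_set (A B : Type) (f : A -> B) (S : A -> Prop) : B -> Prop :=
  fun b => exists a, S a /\ b = f a.

Definition inverts (A B : pzRingType) (f : A -> B) (T : A -> Prop) : Prop :=
  forall t, T t -> exists y, y * f t = 1 /\ f t * y = 1.

(** f : A -> B is the universal T-inverting ring homomorphism, i.e. (B, f) is
    (up to unique A-isomorphism) the canonical map A -> A<T^{-1}>. *)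
Definition is_univ_loc (A B : pzRingType) (T : A -> Prop)
    (f : {rmorphism A -> B}) : Prop :=
  inverts f T /\
  forall (C : pzRingType) (g : {rmorphism A -> C}), inverts g T ->
    exists h : {rmorphism B -> C},
      (forall a, h (f a) = g a) /\
      (forall h' : {rmorphism B -> C}, (forall a, h' (f a) = g a) ->
         forall b, h' b = h b).

(** ass_A(T) = ker (A -> A<T^{-1}>) *)
Definition ass_A (A : pzRingType) (T : A -> Prop) : A -> Prop :=
  fun a => forall (B : pzRingType) (f : {rmorphism A -> B}),
    is_univ_loc T f -> f a = 0.

Definition left_localizable (A : pzRingType) (T : A -> Prop) : Prop :=
  exists (B : pzRingType) (f : {rmorphism A -> B}),
    [/\ is_univ_loc T f, (1 : B) <> 0 &
        forall b : B, exists t a y,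
          [/\ T t, y * f t = 1, f t * y = 1 & b = y * f a]].

Definition prime_a (A : pzRingType) (T : A -> Prop) : A -> Prop :=
  fun a => forall J : ideal A,
    (forall t, T t -> lC (qpi J t)) -> J a.

Lemma prime_a_is_ideal (A : pzRingType) (T : A -> Prop) : is_ideal (prime_a T).
Proof.
split.
- by move=> J _; case: (idealP J).
- by move=> x y Hx Hy J HJ; case: (idealP J) => _ HSub _ _; apply: (HSub); auto.
- by move=> r x Hx J HJ; case: (idealP J) => _ _ HL _; apply: (HL); auto.
- by move=> r x Hx J HJ; case: (idealP J) => _ _ _ HR; apply: (HR); auto.
Qed.

Definition prime_a_ideal (A : pzRingType) (T : A -> Prop) : ideal A :=
  Ideal (prime_a_is_ideal T).

Definition is_left_ore_loc (A Q : pzRingType) (T : A -> Prop)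
    (sigma : {rmorphism A -> Q}) : Prop :=
  [/\ inverts sigma T,
      (forall q : Q, exists t a y,
          [/\ T t, y * sigma t = 1, sigma t * y = 1 & q = y * sigma a]) &
      (forall a, sigma a = 0 <-> ass_l T a)].

From HB Require Import structures.
From mathcomp Require Import all_boot all_algebra generic_quotient boolp.

(** Any ring morphism [g] inverting [S] makes the image of [S] left regular in
    [R / ker g], so [ker g] contains ['a(S)]; thus [R<S^-1>] is a localization
    of ['R = R / 'a(S)].  In ['R] the image ['S] of [S] is left regular, so the
    almost Ore identity [(s1 r - r1 s) s2 = 0] becomes the Ore identity
    [s1 r = r1 s]: ['S] is a left denominator set, and its ring of left
    fractions, composed with the projection, has the universal property of
    [R<S^-1>].  Its kernel is the preimage of [ass_l('S)], and it is nonzero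
    exactly when ['a(S) <> R].  Finally [a_r] lies in ['a(S)], the image [S_r]
    is already left Ore for the same reason, and ['a(S_r)] is the image of
    ['a(S)], which transfers everything to [S_r]. *)

Set Implicit Arguments.
Unset Strict Implicit.
Unset Printing Implicit Defensive.

Import GRing.Theory.
Local Open Scope ring_scope.
Local Open Scope quotient_scope.

Section Ideals.
Variable A : pzRingType.

Lemma qpi_eq0 (I : ideal A) x : qpi I x = 0 <-> I x.
Proof. by rewrite -(rmorph0 (qpi I)) qpiP subr0. Qed.

Lemma ideal_full (I : ideal A) : I 1 -> forall x, I x.
Proof. by case: (idealP I) => _ _ _ IM I1 x; rewrite -[x]mul1r; apply: IM. Qed.

Lemma lC_qpi (I : ideal A) t : lC (qpi I t) <-> forall b, I (b * t) -> I b.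
Proof.
split=> [Ht b /qpi_eq0 Hbt | H]; first by apply/qpi_eq0/Ht; rewrite -rmorphM.
by elim/qpi_ind=> b; rewrite -rmorphM => /qpi_eq0/H/qpi_eq0.
Qed.

Lemma kernel_is_ideal (C : pzRingType) (g : {rmorphism A -> C}) :
  is_ideal (fun x => g x = 0).
Proof.
split=> [|x y gx gy|r x gx|r x gx]; rewrite ?rmorph0 ?rmorphB ?rmorphM //.
- by rewrite gx gy subr0.
- by rewrite gx mulr0.
- by rewrite gx mul0r.
Qed.

Lemma preim_is_ideal (C : pzRingType) (g : {rmorphism A -> C}) (J : ideal C) :
  is_ideal (fun x => J (g x)).
Proof.
case: (idealP J) => J0 JB JL JR.
by split=> [|x y|r x|r x]; rewrite ?rmorph0 ?rmorphB ?rmorphM; auto.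
Qed.

Section ImageIdeal.
Variables (I J : ideal A).
Hypothesis IJ : forall x, I x -> J x.

Definition image_ideal (q : quot I) : Prop := exists2 a, J a & q = qpi I a.

Lemma image_idealE a : image_ideal (qpi I a) <-> J a.
Proof.
split=> [[b Jb /qpiP /IJ Jab] | Ja]; last by exists a.
case: (idealP J) => J0 JB _ _.
by have := JB _ _ Jab (JB _ _ J0 Jb); rewrite sub0r opprK subrK.
Qed.

Lemma image_ideal_is_ideal : is_ideal image_ideal.
Proof.
case: (idealP J) => J0 JB JL JR.
split=> [|++|r|r]; first by rewrite -(rmorph0 (qpi I)); apply/image_idealE.
- by move=> _ _ [x Jx ->] [y Jy ->]; rewrite -rmorphB; apply/image_idealE; auto.
- elim/qpi_ind: r => r _ [x Jx ->]; rewrite -rmorphM; apply/image_idealE; auto.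
- elim/qpi_ind: r => r _ [x Jx ->]; rewrite -rmorphM; apply/image_idealE; auto.
Qed.

End ImageIdeal.
End Ideals.

Section QuotientLift.
Variables (A C : pzRingType) (I : ideal A) (g : {rmorphism A -> C}).
Hypothesis gI : forall x, I x -> g x = 0.

Definition quot_lift (q : quot I) : C := g (repr q).

Lemma quot_liftE a : quot_lift (qpi I a) = g a.
Proof.
by apply/eqP; rewrite -subr_eq0 -rmorphB; apply/eqP/gI; exact: reprP.
Qed.

Lemma quot_lift_is_nmod_morphism : nmod_morphism quot_lift.
Proof.
split=> [|]; first by rewrite -(rmorph0 (qpi I)) quot_liftE rmorph0.
by elim/qpi_ind=> x; elim/qpi_ind=> y; rewrite -rmorphD !quot_liftE rmorphD.
Qed.

Lemma quot_lift_is_monoid_morphism : monoid_morphism quot_lift.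
Proof.
split=> [|]; first by rewrite -(rmorph1 (qpi I)) quot_liftE rmorph1.
by elim/qpi_ind=> x; elim/qpi_ind=> y; rewrite -rmorphM !quot_liftE rmorphM.
Qed.

HB.instance Definition _ := GRing.isNmodMorphism.Build (quot I) C quot_lift
  quot_lift_is_nmod_morphism.
HB.instance Definition _ := GRing.isMonoidMorphism.Build (quot I) C quot_lift
  quot_lift_is_monoid_morphism.

Lemma quot_lift_ex : exists g' : {rmorphism quot I -> C}, forall a, g' (qpi I a) = g a.
Proof. by exists quot_lift; exact: quot_liftE. Qed.

End QuotientLift.

Section Images.
Variables (A B : pzRingType) (f : {rmorphism A -> B}) (T : A -> Prop).

Lemma image_set1 : T 1 -> image_set f T 1.
Proof. by exists 1; rewrite rmorph1. Qed.

Lemma image_setM : (forall s t, T s -> T t -> T (s * t)) ->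
  forall s t, image_set f T s -> image_set f T t -> image_set f T (s * t).
Proof. by move=> TM _ _ [s [Ts ->]] [t [Tt ->]]; exists (s * t); rewrite rmorphM; auto. Qed.

End Images.

Section OreConditions.
Variables (A : pzRingType) (T : A -> Prop).

Lemma left_ore_almost : T 1 -> left_ore T -> almost_left_ore T.
Proof.
move=> T1 Tore s r Ts; have [s' [r' [Ts' E]]] := Tore r s Ts.
by exists s', 1, r'; rewrite E subrr mul0r.
Qed.

Lemma left_ore_lC_denominator :
  T 1 -> left_ore T -> (forall t, T t -> lC t) -> left_denominator T.
Proof. by move=> T1 Tore Treg; split=> // r s /Treg Ts /Ts ->; exists 1; rewrite mulr0. Qed.

Lemma left_ore_quot (I : ideal A) : almost_left_ore T ->
  (forall r, ass_r T r -> I r) -> left_ore (image_set (qpi I) T).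
Proof.
move=> Talm IT r _ [s [Ts ->]]; elim/qpi_ind: r => r.
have [s1 [s2 [r1 [Ts1 Ts2 E]]]] := Talm s r Ts.
exists (qpi I s1), (qpi I r1); split; first by exists s1.
by rewrite -!rmorphM; apply/qpiP/IT; exists s2.
Qed.

End OreConditions.

Section PrimeA.
Variables (A : pzRingType) (T : A -> Prop).

Lemma prime_a_lC t : T t -> lC (qpi (prime_a_ideal T) t).
Proof. by move=> Tt; apply/lC_qpi=> b Hbt J HJ; apply: (lC_qpi J t).1 (HJ t Tt) _ (Hbt J HJ). Qed.

Lemma ass_r_prime_a r : ass_r T r -> prime_a T r.
Proof.
move=> [t [Tt rt0]] J HJ; apply: (lC_qpi J t).1 (HJ t Tt) _ _.
by rewrite rt0; case: (idealP J).
Qed.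

Lemma inverts_prime_a (C : pzRingType) (g : {rmorphism A -> C}) :
  inverts g T -> forall x, prime_a T x -> g x = 0.
Proof.
move=> Hg x /(_ (Ideal (kernel_is_ideal g))); apply=> t Tt; apply/lC_qpi => b /=.
have [y [_ Hy]] := Hg t Tt.
by rewrite rmorphM => Hbt; rewrite -[g b]mulr1 -Hy mulrA Hbt mul0r.
Qed.

Lemma left_localizable_prime_a : left_localizable T -> ~ (forall x, prime_a T x).
Proof.
move=> [B [f [[Hinv _] nz1 _]]] Tfull; apply: nz1.
by rewrite -(rmorph1 f); apply: inverts_prime_a.
Qed.

Lemma prime_a_quot (I : ideal A) : (forall x, I x -> prime_a T x) ->
  forall x, prime_a (image_set (qpi I) T) (qpi I x) <-> prime_a T x.
Proof.
move=> IT x; split=> Hx J HJ.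
- have IJ y (Iy : I y) : J y := IT y Iy J HJ.
  apply/(image_idealE IJ); apply: (Hx (Ideal (image_ideal_is_ideal IJ))).
  move=> _ [t [Tt ->]]; apply/lC_qpi; elim/qpi_ind=> b /=.
  rewrite -rmorphM => /(image_idealE IJ) Hbt; apply/(image_idealE IJ).
  exact: (lC_qpi J t).1 (HJ t Tt) b Hbt.
- apply: (Hx (Ideal (preim_is_ideal (qpi I) J))) => t Tt; apply/lC_qpi => b /=.
  by rewrite rmorphM; apply: (lC_qpi J (qpi I t)).1; apply: HJ; exists t.
Qed.

Lemma prime_a_quot_full (I : ideal A) : (forall x, I x -> prime_a T x) ->
  (forall q, prime_a (image_set (qpi I) T) q) <-> (forall x, prime_a T x).
Proof.
move=> IT; split=> Tfull x; first by apply/(prime_a_quot IT).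
by elim/qpi_ind: x => x; apply/(prime_a_quot IT).
Qed.

End PrimeA.

Section OreLocalization.
Variables (A : pzRingType) (T : A -> Prop).
Hypotheses (T1 : T 1) (TM : forall s t, T s -> T t -> T (s * t)).
Hypotheses (Tore : left_ore T)
  (Tann : forall r s, T s -> r * s = 0 -> exists t, T t /\ t * r = 0).

Lemma ass_lN a : ass_l T a -> ass_l T (- a).
Proof. by case=> t [Tt Ht]; exists t; rewrite mulrN Ht oppr0. Qed.

Lemma ass_lD a b : ass_l T a -> ass_l T b -> ass_l T (a + b).
Proof.
case=> t [Tt Ht] [t' [Tt' Ht']]; have [u [x [Tu E]]] := Tore t Tt'.
exists (u * t); split; first exact: TM.
by rewrite mulrDr -mulrA Ht mulr0 add0r E -mulrA Ht' mulr0.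
Qed.

Lemma ass_lMl r a : ass_l T a -> ass_l T (r * a).
Proof.
case=> t [Tt Ht]; have [u [x [Tu E]]] := Tore r Tt.
by exists u; split=> //; rewrite mulrA E -mulrA Ht mulr0.
Qed.

Lemma ass_l_mulKl w a : T w -> ass_l T (w * a) -> ass_l T a.
Proof. by move=> Tw [t [Tt Ht]]; exists (t * w); split; [exact: TM|rewrite -mulrA]. Qed.

Lemma ass_l_eq_mulr x y s a : T s -> x * s = y * s -> ass_l T (x * a - y * a).
Proof.
move=> Ts /eqP; rewrite -subr_eq0 -mulrBl => /eqP /(Tann Ts) [t [Tt Ht]].
by exists t; rewrite -mulrBl mulrA Ht mul0r.
Qed.

(** [(s, a)] stands for the left fraction [s^-1 a]. *)
Definition frac_eqv (p q : A * A) : Prop :=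
  forall x y, x * p.1 = y * q.1 -> ass_l T (x * p.2 - y * q.2).

Lemma frac_eqv_refl p : T p.1 -> frac_eqv p p.
Proof. by move=> Tp x y; exact: ass_l_eq_mulr. Qed.

Lemma frac_eqv_sym p q : frac_eqv p q -> frac_eqv q p.
Proof. by move=> H x y E; rewrite -opprB; apply/ass_lN/H. Qed.

Lemma frac_eqv_trans p q r : T q.1 -> frac_eqv p q -> frac_eqv q r -> frac_eqv p r.
Proof.
move=> Tq Hpq Hqr x z E.
have [w [y [Tw Ew]]] := Tore (x * p.1) Tq.
have H1 := Hpq (w * x) y (ltac:(by rewrite -mulrA)).
have H2 : ass_l T (y * q.2 - (w * z) * r.2) by apply: Hqr; rewrite -Ew E mulrA.
apply: (ass_l_mulKl Tw).
have -> : w * (x * p.2 - z * r.2) = (w * x * p.2 - y * q.2) + (y * q.2 - w * z * r.2).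
  by rewrite addrA subrK mulrBr !mulrA.
exact: ass_lD H1 H2.
Qed.

(** Pairs whose denominator is not in [T] are all identified with [1^-1 0],
    so that the relation below is an equivalence on all of [A * A]. *)
Definition frac_norm (p : A * A) : A * A := if `[< T p.1 >] then p else (1, 0).

Lemma frac_normT p : T (frac_norm p).1.
Proof. by rewrite /frac_norm; case: asboolP. Qed.

Lemma frac_normE p : T p.1 -> frac_norm p = p.
Proof. by rewrite /frac_norm; case: asboolP. Qed.

Definition frac_rel (p q : A * A) : bool := `[< frac_eqv (frac_norm p) (frac_norm q) >].

Lemma frac_rel_refl : reflexive frac_rel.
Proof. by move=> p; apply/asboolP/frac_eqv_refl/frac_normT. Qed.

Lemma frac_rel_sym : symmetric frac_rel.
Proof. by move=> p q; apply/asboolP/asboolP; exact: frac_eqv_sym. Qed.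

Lemma frac_rel_trans : transitive frac_rel.
Proof.
move=> q p r /asboolP Hpq /asboolP Hqr; apply/asboolP.
exact: frac_eqv_trans (frac_normT q) Hpq Hqr.
Qed.

Canonical frac_rel_equiv := EquivRel frac_rel frac_rel_refl frac_rel_sym frac_rel_trans.

Definition ore_frac := {eq_quot frac_rel_equiv}.
HB.instance Definition _ := Choice.on ore_frac.

Definition frac (s a : A) : ore_frac := \pi_ore_frac (s, a).

Lemma fracP s a s' b : T s -> T s' ->
  frac s a = frac s' b <-> frac_eqv (s, a) (s', b).
Proof.
move=> Ts Ts'; rewrite /frac; split=> [/eqquotP/asboolP|H]; first by rewrite !frac_normE.
by apply/eqquotP/asboolP; rewrite !frac_normE.
Qed.

Definition frac_rep (q : ore_frac) : A * A := frac_norm (repr q).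

Lemma frac_repT q : T (frac_rep q).1.
Proof. exact: frac_normT. Qed.

Lemma frac_repK q : frac (frac_rep q).1 (frac_rep q).2 = q.
Proof.
rewrite /frac -surjective_pairing -[RHS]reprK; apply/eqquotP/asboolP.
by rewrite /frac_rep (frac_normE (frac_normT _)); apply/frac_eqv_refl/frac_normT.
Qed.

Lemma frac_rep_eqv s a : T s -> frac_eqv (frac_rep (frac s a)) (s, a).
Proof. by move=> Ts; have /fracP := frac_repK (frac s a); apply=> //; exact: frac_repT. Qed.

Lemma frac_ind (P : ore_frac -> Prop) :
  (forall s a, T s -> P (frac s a)) -> forall q, P q.
Proof. by move=> H q; rewrite -(frac_repK q); apply/H/frac_repT. Qed.

Lemma frac_expand s a c d : T s -> T d -> c * s = d -> frac s a = frac d (c * a).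
Proof.
move=> Ts Td E; apply/fracP => // x y /=; rewrite -E mulrA mulrA.
exact: ass_l_eq_mulr.
Qed.

Lemma common_denom2 s1 s2 : T s1 -> T s2 ->
  exists d c1 c2, [/\ T d, c1 * s1 = d & c2 * s2 = d].
Proof.
move=> Ts1 Ts2; have [u [x [Tu E]]] := Tore s1 Ts2.
by exists (u * s1), u, x; split=> //; exact: TM.
Qed.

Lemma common_denom3 s1 s2 s3 : T s1 -> T s2 -> T s3 ->
  exists d c1 c2 c3, [/\ T d, c1 * s1 = d, c2 * s2 = d & c3 * s3 = d].
Proof.
move=> Ts1 Ts2 Ts3; have [e [c1 [c2 [Te E1 E2]]]] := common_denom2 Ts1 Ts2.
have [d [f [c3 [Td F1 F3]]]] := common_denom2 Te Ts3.
by exists d, (f * c1), (f * c2), c3; split; rewrite // -mulrA ?E1 ?E2.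
Qed.

Lemma ore_pair_ex r q :
  exists p : A * A, T p.1 /\ p.1 * r = p.2 * (frac_rep q).1.
Proof. by have [u [x [Tu E]]] := Tore r (frac_repT q); exists (u, x). Qed.

Definition ore_pair r q : A * A := proj1_sig (cid (ore_pair_ex r q)).

Lemma ore_pairP r q :
  T (ore_pair r q).1 /\ (ore_pair r q).1 * r = (ore_pair r q).2 * (frac_rep q).1.
Proof. exact: proj2_sig (cid (ore_pair_ex r q)). Qed.

Definition frac_zero := frac 1 0.
Definition frac_one := frac 1 1.
Definition frac_opp q := frac (frac_rep q).1 (- (frac_rep q).2).
(* [s^-1 a + t^-1 b = (u s)^-1 (u a + x b)] when [u s = x t], and
   [s^-1 a * t^-1 b = (u s)^-1 (x b)] when [u a = x t]. *)
Definition frac_add q1 q2 := let w := ore_pair (frac_rep q1).1 q2 in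
  frac (w.1 * (frac_rep q1).1) (w.1 * (frac_rep q1).2 + w.2 * (frac_rep q2).2).
Definition frac_mul q1 q2 := let w := ore_pair (frac_rep q1).2 q2 in
  frac (w.1 * (frac_rep q1).1) (w.2 * (frac_rep q2).2).

Lemma frac_oppE s a : T s -> frac_opp (frac s a) = frac s (- a).
Proof.
move=> Ts; apply/fracP => //; first exact: frac_repT.
move=> x y E /=; rewrite !mulrN opprK addrC -opprB.
exact/ass_lN/frac_rep_eqv.
Qed.

Lemma frac_eqv_add s a s1 a1 t b t1 b1 u x u1 x1 :
  frac_eqv (s, a) (s1, a1) -> frac_eqv (t, b) (t1, b1) ->
  u * s = x * t -> u1 * s1 = x1 * t1 ->
  frac_eqv (u * s, u * a + x * b) (u1 * s1, u1 * a1 + x1 * b1).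
Proof.
move=> H1 H2 E E1 p p' /= Ep.
have F1 := H1 (p * u) (p' * u1) (ltac:(by rewrite -!mulrA)).
have F2 := H2 (p * x) (p' * x1) (ltac:(by rewrite /= -!mulrA -E -E1)).
by rewrite !mulrDr !mulrA opprD addrACA; apply: ass_lD.
Qed.

Lemma frac_eqv_mul s a s1 a1 t b t1 b1 u x u1 x1 :
  frac_eqv (s, a) (s1, a1) -> frac_eqv (t, b) (t1, b1) ->
  u * a = x * t -> u1 * a1 = x1 * t1 ->
  frac_eqv (u * s, x * b) (u1 * s1, x1 * b1).
Proof.
move=> H1 H2 E E1 p p' /= Ep.
have [w [Tw Hw]] := H1 (p * u) (p' * u1) (ltac:(by rewrite -!mulrA)).
apply: (ass_l_mulKl Tw).
have Ht : (w * p * x) * t = (w * p' * x1) * t1.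
  move: Hw => /=; rewrite -!(mulrA p) -!(mulrA p') E E1 mulrBr => /eqP.
  by rewrite subr_eq0 => /eqP; rewrite !mulrA.
by rewrite mulrBr !mulrA; exact: H2 _ _ Ht.
Qed.

Lemma frac_addE s a t b u x : T s -> T t -> T (u * s) -> u * s = x * t ->
  frac_add (frac s a) (frac t b) = frac (u * s) (u * a + x * b).
Proof.
move=> Ts Tt Tus E; rewrite /frac_add.
have [Tw Ew] := ore_pairP (frac_rep (frac s a)).1 (frac t b).
apply/fracP => //; first by apply: TM => //; exact: frac_repT.
by apply: frac_eqv_add Ew E; exact: frac_rep_eqv.
Qed.

Lemma frac_mulE s a t b u x : T s -> T t -> T u -> u * a = x * t ->
  frac_mul (frac s a) (frac t b) = frac (u * s) (x * b).
Proof.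
move=> Ts Tt Tu E; rewrite /frac_mul.
have [Tw Ew] := ore_pairP (frac_rep (frac s a)).2 (frac t b).
apply/fracP => //; [by apply: TM => //; exact: frac_repT|exact: TM|].
by apply: frac_eqv_mul Ew E; exact: frac_rep_eqv.
Qed.

Lemma frac_add_same d a b : T d -> frac_add (frac d a) (frac d b) = frac d (a + b).
Proof. by move=> Td; rewrite (@frac_addE _ _ _ _ 1 1) ?mul1r. Qed.

Lemma frac_addA : associative frac_add.
Proof.
elim/frac_ind=> s1 a1 Ts1; elim/frac_ind=> s2 a2 Ts2; elim/frac_ind=> s3 a3 Ts3.
have [d [c1 [c2 [c3 [Td E1 E2 E3]]]]] := common_denom3 Ts1 Ts2 Ts3.
rewrite (frac_expand a1 Ts1 Td E1) (frac_expand a2 Ts2 Td E2).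
by rewrite (frac_expand a3 Ts3 Td E3) !frac_add_same // addrA.
Qed.

Lemma frac_addC : commutative frac_add.
Proof.
elim/frac_ind=> s1 a1 Ts1; elim/frac_ind=> s2 a2 Ts2.
have [d [c1 [c2 [Td E1 E2]]]] := common_denom2 Ts1 Ts2.
by rewrite (frac_expand a1 Ts1 Td E1) (frac_expand a2 Ts2 Td E2) !frac_add_same // addrC.
Qed.

Lemma frac_zero_expand s : T s -> frac_zero = frac s 0.
Proof. by move=> Ts; rewrite /frac_zero (@frac_expand 1 0 s s) ?mulr1 ?mulr0. Qed.

Lemma frac_add0 : left_id frac_zero frac_add.
Proof.
by elim/frac_ind=> s a Ts; rewrite (frac_zero_expand Ts) frac_add_same // add0r.
Qed.

Lemma frac_addN : left_inverse frac_zero frac_opp frac_add.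
Proof.
by elim/frac_ind=> s a Ts; rewrite frac_oppE // frac_add_same // addNr -frac_zero_expand.
Qed.

Lemma frac_mulA : associative frac_mul.
Proof.
elim/frac_ind=> s a Ts; elim/frac_ind=> t b Tt; elim/frac_ind=> r c Tr.
have [w [z [Tw Ew]]] := Tore b Tr.
have [u [x [Tu Eu]]] := Tore a Tt.
have [v [n [Tv Ev]]] := Tore x Tw.
have Tus := TM Tu Ts; have Twt := TM Tw Tt; have Tvu := TM Tv Tu.
rewrite (frac_mulE b Ts Tt Tu Eu) (frac_mulE c Tt Tr Tw Ew).
rewrite (@frac_mulE (u * s) (x * b) r c v (n * z)) //; last by rewrite mulrA Ev -!mulrA Ew.
rewrite (@frac_mulE s a (w * t) (z * c) (v * u) n) ?mulrA //.
by rewrite -mulrA Eu !mulrA Ev.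
Qed.

Lemma frac_mul1 : left_id frac_one frac_mul.
Proof.
by elim/frac_ind=> t b Tt; rewrite /frac_one (@frac_mulE _ _ _ _ t 1) ?mulr1 ?mul1r.
Qed.

Lemma frac_mulr1 : right_id frac_one frac_mul.
Proof.
by elim/frac_ind=> s a Ts; rewrite /frac_one (@frac_mulE _ _ _ _ 1 a) ?mulr1 ?mul1r.
Qed.

Lemma frac_mulDl : left_distributive frac_mul frac_add.
Proof.
elim/frac_ind=> s1 a Ts1; elim/frac_ind=> s2 b Ts2; elim/frac_ind=> t c Tt.
have [d [c1 [c2 [Td E1 E2]]]] := common_denom2 Ts1 Ts2.
rewrite (frac_expand a Ts1 Td E1) (frac_expand b Ts2 Td E2) frac_add_same //.
have [u1 [x1 [Tu1 F1]]] := Tore (c1 * a) Tt.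
have [u2 [x2 [Tu2 F2]]] := Tore (u1 * (c2 * b)) Tt.
have Tu : T (u2 * u1) by exact: TM.
rewrite (@frac_mulE d (c1 * a + c2 * b) t c (u2 * u1) (u2 * x1 + x2)) //; last first.
  by rewrite mulrDr mulrDl -!mulrA F1 F2.
rewrite (@frac_mulE d (c1 * a) t c (u2 * u1) (u2 * x1)) //; last by rewrite -!mulrA F1.
rewrite (@frac_mulE d (c2 * b) t c (u2 * u1) x2) //; last by rewrite -mulrA F2.
by rewrite frac_add_same ?mulrDl //; exact: TM.
Qed.

Lemma frac_mulDr : right_distributive frac_mul frac_add.
Proof.
elim/frac_ind=> s a Ts; elim/frac_ind=> s2 b Ts2; elim/frac_ind=> s3 c Ts3.
have [d [c2 [c3 [Td E2 E3]]]] := common_denom2 Ts2 Ts3.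
rewrite (frac_expand b Ts2 Td E2) (frac_expand c Ts3 Td E3) frac_add_same //.
have [u [x [Tu F]]] := Tore a Td.
by rewrite !(frac_mulE _ Ts Td Tu F) frac_add_same ?mulrDr //; exact: TM.
Qed.

HB.instance Definition _ := GRing.isPzRing.Build ore_frac
  frac_addA frac_addC frac_add0 frac_addN frac_mulA frac_mul1 frac_mulr1
  frac_mulDl frac_mulDr.

Definition frac_num (a : A) : ore_frac := frac 1 a.

Lemma frac_num_is_nmod_morphism : nmod_morphism frac_num.
Proof. by split=> // x y; exact: (esym (frac_add_same _ _ T1)). Qed.

Lemma frac_num_is_monoid_morphism : monoid_morphism frac_num.
Proof.
split=> // x y; rewrite /frac_num.
by rewrite [RHS](@frac_mulE _ _ _ _ 1 x) ?mul1r ?mulr1.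
Qed.

HB.instance Definition _ := GRing.isNmodMorphism.Build A ore_frac frac_num
  frac_num_is_nmod_morphism.
HB.instance Definition _ := GRing.isMonoidMorphism.Build A ore_frac frac_num
  frac_num_is_monoid_morphism.

Lemma frac_mul_split s a : T s -> frac s a = frac s 1 * frac_num a.
Proof. by move=> Ts; rewrite [RHS](@frac_mulE _ _ _ _ 1 1) ?mul1r ?mulr1. Qed.

Lemma frac_invl s : T s -> frac s 1 * frac_num s = 1.
Proof. by move=> Ts; rewrite -frac_mul_split // [RHS](@frac_expand 1 1 s s) ?mulr1. Qed.

Lemma frac_invr s : T s -> frac_num s * frac s 1 = 1.
Proof. by move=> Ts; rewrite [LHS](@frac_mulE _ _ _ _ 1 1) ?mul1r ?mulr1. Qed.

Lemma frac_num_eq0 a : frac_num a = 0 <-> ass_l T a.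
Proof.
split=> [/(fracP _ _ T1 T1) /(_ 1 1 erefl) | Ha]; first by rewrite !mul1r subr0.
by apply/fracP => // x y /=; rewrite !mulr1 => ->; rewrite mulr0 subr0; exact: ass_lMl.
Qed.

Lemma frac_num_left_ore_loc : is_left_ore_loc T frac_num.
Proof.
split.
- by move=> t Tt; exists (frac t 1); rewrite frac_invl ?frac_invr.
- elim/frac_ind=> s a Ts; exists s, a, (frac s 1).
  by rewrite frac_invl ?frac_invr -?frac_mul_split.
- exact: frac_num_eq0.
Qed.

End OreLocalization.

Lemma left_ore_loc_exists (A : pzRingType) (T : A -> Prop) :
  T 1 -> (forall s t, T s -> T t -> T (s * t)) -> left_denominator T ->
  exists (Q : pzRingType) (sigma : {rmorphism A -> Q}), is_left_ore_loc T sigma.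
Proof.
move=> T1 TM [Tore Tann]; exists (ore_frac T1 TM Tore Tann), (frac_num T1 TM Tore Tann).
exact: frac_num_left_ore_loc.
Qed.

Section OreLocalizationUniversal.
Variables (A Q : pzRingType) (T : A -> Prop) (sigma : {rmorphism A -> Q}).
Hypothesis sigma_loc : is_left_ore_loc T sigma.

Lemma left_ore_loc_ext (C : pzRingType) (h h' : {rmorphism Q -> C}) :
  (forall a, h (sigma a) = h' (sigma a)) -> forall q, h q = h' q.
Proof.
move=> hh' q; case: sigma_loc => _ /(_ q) [t [a [y [Tt Hy1 Hy2 ->]]]] _.
have hy : h y = h' y.
  by rewrite -[h y]mulr1 -(rmorph1 h') -Hy2 rmorphM mulrA -hh' -rmorphM Hy1 !rmorph1 mul1r.
by rewrite !rmorphM hy hh'.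
Qed.

Lemma left_ore_loc_denom q : exists t a, T t /\ sigma t * q = sigma a.
Proof.
case: sigma_loc => _ /(_ q) [t [a [y [Tt _ Hy ->]]]] _.
by exists t, a; rewrite mulrA Hy mul1r.
Qed.

Hypotheses (TM : forall s t, T s -> T t -> T (s * t)) (Tore : left_ore T).
Variables (C : pzRingType) (g : {rmorphism A -> C}).
Hypothesis g_inv : inverts g T.

Lemma inverts_cancel t u v : T t -> g t * u = g t * v -> u = v.
Proof.
by move=> Tt E; have [y [Hy _]] := g_inv Tt; rewrite -[u]mul1r -[v]mul1r -Hy -!mulrA E.
Qed.

Lemma inverts_sigma_eq x y : sigma x = sigma y -> g x = g y.
Proof.
case: sigma_loc => _ _ sigma_ker.
move/eqP; rewrite -subr_eq0 -rmorphB => /eqP /sigma_ker [t [Tt Ht]].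
apply: (inverts_cancel Tt); apply/eqP; rewrite -subr_eq0 -mulrBr -rmorphB.
by rewrite -rmorphM Ht rmorph0.
Qed.

Lemma ore_lift_ex q :
  exists c, exists t a, [/\ T t, sigma t * q = sigma a & g t * c = g a].
Proof.
have [t [a [Tt Hq]]] := left_ore_loc_denom q; have [y [_ Hy]] := g_inv Tt.
by exists (y * g a), t, a; rewrite mulrA Hy mul1r.
Qed.

(** The extension of [g] to [Q], sending [s^-1 a] to [(g s)^-1 (g a)]. *)
Definition ore_lift (q : Q) : C := proj1_sig (cid (ore_lift_ex q)).

Lemma ore_liftP t a q : T t -> sigma t * q = sigma a -> g t * ore_lift q = g a.
Proof.
move=> Tt Hq; rewrite /ore_lift; case: cid => c /= [t1 [a1 [Tt1 Hq1 Hc]]].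
have [s0 [r0 [Ts0 E]]] := Tore t Tt1.
have E' : g (s0 * a) = g (r0 * a1).
  by apply: inverts_sigma_eq; rewrite !rmorphM -Hq -Hq1 !mulrA -!rmorphM E.
apply: (inverts_cancel Ts0).
by rewrite mulrA -rmorphM E rmorphM -mulrA Hc -rmorphM -E' rmorphM.
Qed.

Lemma ore_lift_sigma a : ore_lift (sigma a) = g a.
Proof.
have [t [b [Tt Hq]]] := left_ore_loc_denom (sigma a).
apply: (inverts_cancel Tt); rewrite (ore_liftP Tt Hq) -rmorphM.
by apply: inverts_sigma_eq; rewrite -Hq rmorphM.
Qed.

Lemma ore_lift_is_nmod_morphism : nmod_morphism ore_lift.
Proof.
split=> [|q1 q2]; first by rewrite -(rmorph0 sigma) ore_lift_sigma rmorph0.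
have [t1 [a1 [Tt1 Hq1]]] := left_ore_loc_denom q1.
have [t2 [a2 [Tt2 Hq2]]] := left_ore_loc_denom q2.
have [s0 [r0 [Ts0 E]]] := Tore t1 Tt2.
have Ts0t1 : T (s0 * t1) by exact: TM.
have H : sigma (s0 * t1) * (q1 + q2) = sigma (s0 * a1 + r0 * a2).
  by rewrite mulrDr {2}E !rmorphD !rmorphM -!mulrA Hq1 Hq2.
apply: (inverts_cancel Ts0t1); rewrite (ore_liftP Ts0t1 H) mulrDr {2}E.
by rewrite !rmorphM -!mulrA (ore_liftP Tt1 Hq1) (ore_liftP Tt2 Hq2) rmorphD !rmorphM.
Qed.

Lemma ore_lift_is_monoid_morphism : monoid_morphism ore_lift.
Proof.
split=> [|q1 q2]; first by rewrite -(rmorph1 sigma) ore_lift_sigma rmorph1.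
have [t1 [a1 [Tt1 Hq1]]] := left_ore_loc_denom q1.
have [t2 [a2 [Tt2 Hq2]]] := left_ore_loc_denom q2.
have [s0 [r0 [Ts0 E]]] := Tore a1 Tt2.
have Ts0t1 : T (s0 * t1) by exact: TM.
have H : sigma (s0 * t1) * (q1 * q2) = sigma (r0 * a2).
  rewrite rmorphM -mulrA (mulrA (sigma t1)) Hq1 mulrA -rmorphM E rmorphM.
  by rewrite -mulrA Hq2 -rmorphM.
apply: (inverts_cancel Ts0t1); rewrite (ore_liftP Ts0t1 H).
have -> : g (s0 * t1) * (ore_lift q1 * ore_lift q2) =
          g s0 * (g t1 * ore_lift q1) * ore_lift q2 by rewrite rmorphM !mulrA.
by rewrite (ore_liftP Tt1 Hq1) -rmorphM E (rmorphM g r0 t2) -mulrA (ore_liftP Tt2 Hq2) rmorphM.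
Qed.

HB.instance Definition _ := GRing.isNmodMorphism.Build Q C ore_lift
  ore_lift_is_nmod_morphism.
HB.instance Definition _ := GRing.isMonoidMorphism.Build Q C ore_lift
  ore_lift_is_monoid_morphism.

Lemma left_ore_loc_lift : exists h : {rmorphism Q -> C}, forall a, h (sigma a) = g a.
Proof. by exists ore_lift; exact: ore_lift_sigma. Qed.

End OreLocalizationUniversal.

Lemma ass_A_univ_loc (A B : pzRingType) (T : A -> Prop) (f : {rmorphism A -> B}) :
  is_univ_loc T f -> forall a, ass_A T a <-> f a = 0.
Proof.
move=> Hf a; split=> [|fa0 B' f' [f'_inv _]]; first exact.
have [h [hf _]] := Hf.2 B' f' f'_inv.
by rewrite -hf fa0 rmorph0.
Qed.

Section PrimeQuotientLocalization.
Variables (A : pzRingType) (T : A -> Prop).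
Hypotheses (T1 : T 1) (TM : forall s t, T s -> T t -> T (s * t))
  (Talm : almost_left_ore T).

Let pa := prime_a_ideal T.
Let pT := image_set (qpi pa) T.

Lemma prime_image_lC y : pT y -> lC y.
Proof. by case=> t [Tt ->]; exact: prime_a_lC. Qed.

Lemma prime_image_left_ore : left_ore pT.
Proof. by apply: left_ore_quot => // r; exact: ass_r_prime_a. Qed.

Lemma prime_image_denominator : left_denominator pT.
Proof.
apply: left_ore_lC_denominator; [exact: image_set1 | exact: prime_image_left_ore |].
exact: prime_image_lC.
Qed.

Lemma prime_image_loc_exists :
  exists (Q : pzRingType) (sigma : {rmorphism quot pa -> Q}), is_left_ore_loc pT sigma.
Proof.
apply: left_ore_loc_exists; [exact: image_set1 | exact: image_setM |].
exact: prime_image_denominator.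
Qed.

Lemma prime_image_loc_univ (Q : pzRingType) (sigma : {rmorphism quot pa -> Q}) :
  is_left_ore_loc pT sigma -> is_univ_loc T (sigma \o qpi pa : {rmorphism A -> Q}).
Proof.
move=> Hloc; split=> [t Tt | C g Hg].
  by case: Hloc => Hinv _ _; apply: Hinv; exists t.
have [g' g'E] := quot_lift_ex (I := pa) (inverts_prime_a Hg).
have g'_inv : inverts g' pT by move=> _ [t [Tt ->]]; rewrite g'E; exact: Hg.
have [h hE] := left_ore_loc_lift Hloc (image_setM (f := qpi pa) TM) prime_image_left_ore g'_inv.
exists h; split=> [a | h' h'E b]; first by rewrite /= hE g'E.
apply: (left_ore_loc_ext Hloc) => q; elim/qpi_ind: q => a.
by rewrite hE g'E -h'E.
Qed.

Lemma ass_A_prime_image r : ass_A T r <-> ass_l pT (qpi pa r).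
Proof.
have [Q [sigma Hloc]] := prime_image_loc_exists.
rewrite (ass_A_univ_loc (prime_image_loc_univ Hloc)).
by case: Hloc => _ _ ->.
Qed.

Lemma prime_a_left_localizable : ~ (forall x, prime_a T x) -> left_localizable T.
Proof.
move=> pa_proper; have [Q [sigma Hloc]] := prime_image_loc_exists.
exists Q, (sigma \o qpi pa : {rmorphism A -> Q}); split.
- exact: prime_image_loc_univ.
- move=> Q0; apply/pa_proper/(ideal_full (I := pa))/qpi_eq0.
  case: Hloc => _ _ /(_ 1) [+ _]; rewrite rmorph1 => /(_ Q0) [_ [[t [Tt ->]]]].
  by rewrite mulr1 -[qpi pa t]mul1r rmorph1 => /(prime_a_lC Tt).
- move=> b; case: Hloc => _ /(_ b) [_ [a [y [[t [Tt ->]] Hy1 Hy2 ->]]]] _.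
  by exists t, (repr a), y; rewrite /= qpi_repr.
Qed.

End PrimeQuotientLocalization.

Lemma left_localizableE (A : pzRingType) (T : A -> Prop) :
  T 1 -> (forall s t, T s -> T t -> T (s * t)) -> almost_left_ore T ->
  left_localizable T <-> ~ (forall x, prime_a T x).
Proof.
by move=> T1 TM Talm; split; [exact: left_localizable_prime_a | exact: prime_a_left_localizable].
Qed.

Theorem theorem4p2 (R : pzRingType) (S : R -> Prop) :
  mult_set S -> almost_left_ore S ->
  let a := ass_A S in
  let ar := gen_ideal_ideal (ass_r S) in
  let Sr := image_set (qpi ar) S in
  (* 1 *)
  left_ore Sr /\
  (* 2 *)
  [<-> left_localizable S;
       left_localizable Sr;
       ~ (forall x : quot ar, prime_a Sr x);
       ~ (forall x : R, prime_a S x)] /\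
  (* 3 *)
  (~ (forall x : R, prime_a S x) ->
   let pa := prime_a_ideal S in
   let pS := image_set (qpi pa) S in
   [/\ (* (a) *) left_denominator pS /\ (forall y, pS y -> lC y),
       (* (b) *) (forall r : R, a r <-> ass_l pS (qpi pa r)) &
       (* (c) *) forall (Q : pzRingType) (sigma : {rmorphism quot pa -> Q}),
                   is_left_ore_loc pS sigma ->
                   is_univ_loc S (sigma \o qpi pa : {rmorphism R -> Q})]).
Proof.
move=> [SM S1 _] Salm a ar Sr.
have ar_pa x : ar x -> prime_a S x.
  by move/(_ _ (prime_a_is_ideal S)); apply; exact: ass_r_prime_a.
have Sr_ore : left_ore Sr by apply: left_ore_quot => // r Hr J _; apply.
have Sr1 : Sr 1 := image_set1 (qpi ar) S1.
have locS := left_localizableE S1 SM Salm.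
have locSr := left_localizableE Sr1 (image_setM (f := qpi ar) SM) (left_ore_almost Sr1 Sr_ore).
have pa_full := prime_a_quot_full ar_pa.
split=> //; split.
  tfae=> [/locS Hpa | /locSr // | Hpa Hall | /locS //].
  - by apply/locSr => Hall; apply/Hpa/pa_full.
  - by apply/Hpa/pa_full.
move=> _ pa pS; split.
- by split; [exact: prime_image_denominator | exact: prime_image_lC].
- exact: ass_A_prime_image.
- by move=> Q sigma; exact: prime_image_loc_univ.
Qed.
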